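(* For all integers $m\ge 2$ and $k\ge 2$, $h(K(m,2,\ldots,2))=ch(K(m,2,\ldots,2))$, where $K(m,2,\ldots,2)$ denotes the complete $k$-partite graph with one part of size $m$ and $k-1$ parts of size $2$.
   Context: All graphs are finite and simple. A list assignment $L$ to a graph $G$ assigns a finite set $L(v)$ to each vertex $v$; a proper $L$-coloring is a map $\psi$ with $\psi(v)\in L(v)$ for all $v$ and $\psi(u)\ne\psi(v)$ for every edge $uv$. The choice number $ch(G)$ is the least $k$ such that $G$ is properly $L$-colorable whenever $|L(v)|\ge k$ for all $v$. For a subgraph $H$ of $G$ and a color $\sigma$, let $H_\sigma$ denote the subgraph of $H$ induced by $\{v\in V(H):\sigma\in L(v)\}$, and let $\alpha$ denote the independence number (with $\alpha$ of the null graph equal to $0$). $G$ and $L$ satisfy Hall's condition if $\sum_{\sigma}\alpha(H_\sigma)\ge |V(H)|$ for every subgraph $H$ of $G$, the sum being over all colors. The Hall number $h(G)$ is the smallest positive integer $k$ such that $G$ has a proper $L$-coloring whenever $G$ and $L$ satisfy Hall's condition and $|L(v)|\ge k$ for every $v\in V(G)$. *)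

From Stdlib Require Import ClassicalEpsilon.
From mathcomp Require Import all_boot.
Set Implicit Arguments. Unset Strict Implicit. Unset Printing Implicit Defensive.

(* A list assignment
   L : T -> seq nat; the list of v is the finite set of members of L v,
   whose cardinality is size (undup (L v)). *)

Definition simple_graph (T : finType) (e : rel T) : Prop :=
  symmetric e /\ irreflexive e.

Definition list_size (s : seq nat) : nat := size (undup s).

Definition proper_L_coloring (T : finType) (e : rel T) (L : T -> seq nat)
  (psi : T -> nat) : Prop :=
  (forall v, psi v \in L v) /\ (forall u v, e u v -> psi u != psi v).

Definition L_colorable (T : finType) (e : rel T) (L : T -> seq nat) : Prop :=
  exists psi, proper_L_coloring e L psi.

Definition choosable (T : finType) (e : rel T) (k : nat) : Prop :=
  forall L : T -> seq nat, (forall v, k <= list_size (L v)) -> L_colorable e L.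

Definition independent (T : finType) (f : rel T) (B : {set T}) : bool :=
  [forall x in B, forall y in B, ~~ f x y].

Definition alpha (T : finType) (f : rel T) (A : {set T}) : nat :=
  \max_(B : {set T} | (B \subset A) && independent f B) #|B|.

(* All colors appearing in some list. Colors in no list contribute
   alpha(null graph) = 0 to the Hall sum. *)
Definition all_colors (T : finType) (L : T -> seq nat) : seq nat :=
  undup (flatten [seq L v | v <- enum T]).

(* A subgraph H of G is given by a vertex set S and an edge relation f
   contained in e (only edges with both ends in S matter).
   H_sigma is the subgraph of H induced by {v in S | sigma \in L v}. *)
Definition hall_condition (T : finType) (e : rel T) (L : T -> seq nat) : Prop :=
  forall (S : {set T}) (f : rel T), subrel f e ->
    #|S| <= \sum_(sigma <- all_colors L)
              alpha f [set v in S | sigma \in L v].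

Definition hall_good (T : finType) (e : rel T) (k : nat) : Prop :=
  forall L : T -> seq nat, hall_condition e L ->
    (forall v, k <= list_size (L v)) -> L_colorable e L.

Definition is_least (P : nat -> Prop) (n : nat) : Prop :=
  P n /\ forall m, P m -> n <= m.

Definition choice_number (T : finType) (e : rel T) : nat :=
  epsilon (inhabits 0%N) (is_least (choosable e)).

Definition hall_number (T : finType) (e : rel T) : nat :=
  epsilon (inhabits 0%N) (is_least (fun k => 0 < k /\ hall_good e k)).

(* K(m,2,...,2) with k parts: one part 'I_m, and k-1 parts of size 2
   indexed by 'I_(k.-1) * 'I_2. *)
Definition Kvert (m k : nat) : finType := ('I_m + 'I_(k.-1) * 'I_2)%type.

Definition Kpart (m k : nat) (x : Kvert m k) : nat :=
  match x with inl _ => 0 | inr p => (nat_of_ord p.1).+1 end.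

Definition Kedge (m k : nat) : rel (Kvert m k) :=
  fun x y => Kpart x != Kpart y.

From Stdlib Require Import ClassicalEpsilon Wf_nat.
From mathcomp Require Import all_boot zify.
Set Implicit Arguments. Unset Strict Implicit. Unset Printing Implicit Defensive.

(* Choosability trivially implies the Hall property, so only h >= ch needs an argument.
   K(m,2,...,2) is properly colored by its k parts, and for any graph with a proper
   p-coloring, lists of size >= p satisfy Hall's condition automatically: every color
   class S_c splits into p independent sets, so |S_c| <= p alpha(S_c), and summing over
   the colors gives p|S| <= sum of list sizes = sum_c |S_c| <= p * (Hall sum).  Hence for j >= k being Hall-good and being
   j-choosable coincide.  It remains to see that no j < k is Hall-good, which is
   witnessed by a list assignment of size >= k-1 that satisfies Hall's condition but
   admits no coloring. *)

Definition hall_sum (T : finType) (f : rel T) (L : T -> seq nat) (S : {set T}) : nat :=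
  \sum_(c <- all_colors L) alpha f [set v in S | c \in L v].

Definition proper_coloring (T : Type) (e : rel T) (U : eqType) (col : T -> U) : Prop :=
  forall u v, e u v -> col u != col v.

Section HallCondition.
Variables (T : finType) (e : rel T).

Lemma alpha_ge (f : rel T) (A B : {set T}) :
  B \subset A -> independent f B -> #|B| <= alpha f A.
Proof.
move=> sBA indB; rewrite /alpha.
by apply: (leq_bigmax_cond (F := fun B : {set T} => #|B|)); rewrite sBA indB.
Qed.

Lemma independent_subrel (f : rel T) (B : {set T}) :
  subrel f e -> independent e B -> independent f B.
Proof.
move=> sfe /forall_inP indB; apply/forall_inP => x xB; apply/forall_inP => y yB.
exact: contra (sfe x y) (forall_inP (indB x xB) y yB).
Qed.

Lemma independent_subset (f : rel T) (A B : {set T}) :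
  B \subset A -> independent f A -> independent f B.
Proof.
move=> /subsetP sBA /forall_inP indA; apply/forall_inP => x xB; apply/forall_inP => y yB.
exact: forall_inP (indA x (sBA x xB)) y (sBA y yB).
Qed.

Lemma card_sep (A : {set T}) (P : pred T) :
  #|[set v in A | P v]| = \sum_(v in A) P v.
Proof.
rewrite -sum1_card [LHS]big_mkcond [RHS]big_mkcond /=.
by apply: eq_bigr => v _; rewrite inE; case: (v \in A); case: (P v).
Qed.

Lemma card_fibers (U : eqType) (A : {set T}) (h : T -> U) (s : seq U) :
  uniq s -> {in A, forall v, h v \in s} ->
  #|A| = \sum_(u <- s) #|[set v in A | h v == u]|.
Proof.
move=> s_uniq hA; under eq_bigr => u _ do rewrite card_sep.
rewrite exchange_big /= -sum1_card; apply: eq_bigr => v vA.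
have := count_uniq_mem (h v) s_uniq; rewrite hA //= => <-.
rewrite -sum1_count big_mkcond /=.
by apply: eq_bigr => u _; rewrite eq_sym; case: (_ == _).
Qed.

Lemma mem_all_colors (L : T -> seq nat) v c : c \in L v -> c \in all_colors L.
Proof.
by move=> cL; rewrite mem_undup; apply/flatten_mapP; exists v; rewrite ?mem_enum.
Qed.

Lemma sum_card_color_classes (L : T -> seq nat) (S : {set T}) :
  \sum_(c <- all_colors L) #|[set v in S | c \in L v]| =
  \sum_(v in S) list_size (L v).
Proof.
under eq_bigr => c _ do rewrite card_sep.
rewrite exchange_big /=; apply: eq_bigr => v _; rewrite /list_size.
have -> : \sum_(c <- all_colors L) (c \in L v : nat) = count (mem (L v)) (all_colors L).
  by rewrite -sum1_count [RHS]big_mkcond /=; apply: eq_bigr => c _; case: (c \in L v).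
rewrite -size_filter; apply/perm_size/uniq_perm; rewrite ?filter_uniq ?undup_uniq //.
move=> c; rewrite mem_filter mem_undup /=.
by case cL: (c \in L v) => //=; apply: mem_all_colors cL.
Qed.

Lemma independent_fiber (U : eqType) (col : T -> U) (A : {set T}) (c : U) :
  proper_coloring e col -> independent e [set v in A | col v == c].
Proof.
move=> col_e; apply/forall_inP => x; rewrite inE => /andP[_ /eqP xc].
apply/forall_inP => y; rewrite inE => /andP[_ /eqP yc].
by apply: contraT; rewrite negbK => /col_e; rewrite xc yc eqxx.
Qed.

Lemma leq_sum_independent_hall_sum (f : rel T) (L : T -> seq nat) (S : {set T})
    (I : nat -> {set T}) :
  subrel f e -> (forall c, I c \subset [set v in S | c \in L v]) ->
  (forall c, independent e (I c)) ->
  \sum_(c <- all_colors L) #|I c| <= hall_sum f L S.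
Proof.
move=> sfe sI indI; apply: leq_sum => c _.
exact: alpha_ge (sI c) (independent_subrel sfe (indI c)).
Qed.

Lemma card_le_hall_sum_of_coloring (f : rel T) (L : T -> seq nat) (S : {set T})
    (psi : T -> nat) :
  subrel f e -> proper_coloring e psi -> {in S, forall v, psi v \in L v} ->
  #|S| <= hall_sum f L S.
Proof.
move=> sfe psi_e psi_L.
have psi_S : {in S, forall v, psi v \in all_colors L}.
  by move=> v vS; apply: mem_all_colors (psi_L v vS).
rewrite (card_fibers (undup_uniq _) psi_S).
apply: (leq_sum_independent_hall_sum (I := fun c => [set v in S | psi v == c])) => // c.
  by apply/subsetP => v; rewrite !inE => /andP[vS /eqP <-]; rewrite vS psi_L.
exact: independent_fiber.
Qed.

Lemma hall_condition_of_coloring (p : nat) (col : T -> 'I_p) (L : T -> seq nat) :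
  proper_coloring e col -> (forall v, p <= list_size (L v)) -> hall_condition e L.
Proof.
move=> col_e Lp S f sfe.
case: (set_0Vmem S) => [-> | [v0 _]]; first by rewrite cards0.
have p_gt0 : 0 < p := leq_ltn_trans (leq0n _) (ltn_ord (col v0)).
have class_le c : #|[set v in S | c \in L v]| <= p * alpha f [set v in S | c \in L v].
  rewrite (@card_fibers _ _ col _ (enum_uniq 'I_p)); last by move=> v; rewrite mem_enum.
  rewrite -[X in X * _]card_ord cardE -sum1_size big_distrl /=.
  apply: leq_sum => i _; rewrite mul1n; apply: alpha_ge.
    by apply/subsetP => v; rewrite inE => /andP[].
  exact: independent_subrel sfe (independent_fiber _ _ col_e).
rewrite -(leq_pmul2l p_gt0) /hall_sum big_distrr /=.
apply: (@leq_trans (\sum_(c <- all_colors L) #|[set v in S | c \in L v]|)).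
  rewrite sum_card_color_classes -sum1_card big_distrr /=.
  by apply: leq_sum => v _; rewrite muln1.
by apply: leq_sum => c _; apply: class_le.
Qed.
End HallCondition.

Lemma clique_size_le (T : eqType) (e : rel T) (psi : T -> nat) (Q : seq T) (C : seq nat) :
  uniq Q -> {in Q &, forall u v, u != v -> e u v} -> proper_coloring e psi ->
  {in Q, forall v, psi v \in C} -> size Q <= size C.
Proof.
move=> Q_uniq Q_clique psi_e psi_C; rewrite -(size_map psi); apply: uniq_leq_size.
  rewrite map_inj_in_uniq // => u v uQ vQ /eqP; apply: contraTeq => /(Q_clique u v uQ vQ).
  exact: psi_e.
by move=> c /mapP [v vQ ->]; apply: psi_C.
Qed.

Lemma choosable_hall_good (T : finType) (e : rel T) (j : nat) :
  choosable e j -> hall_good e j.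
Proof. by move=> ch_j L _; apply: ch_j. Qed.

Lemma hall_good_choosable (T : finType) (e : rel T) (p j : nat) (col : T -> 'I_p) :
  proper_coloring e col -> p <= j -> hall_good e j -> choosable e j.
Proof.
move=> col_e le_pj good_j L Lj; apply: good_j (Lj).
by apply: (hall_condition_of_coloring col_e) => v; apply: leq_trans le_pj (Lj v).
Qed.

Lemma exists_fresh_color (l s : seq nat) :
  size s < list_size l -> exists2 c, c \in l & c \notin s.
Proof.
move=> lt_sl; apply/hasP/negPn/negP => /hasPn l_in_s.
have : {subset undup l <= s} by move=> c; rewrite mem_undup => /l_in_s; rewrite negbK.
by move/(uniq_leq_size (undup_uniq l)); rewrite leqNgt lt_sl.
Qed.

Lemma exists_injective_list_coloring (T : eqType) (L : T -> seq nat) (s : seq T) :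
  (forall v, size s <= list_size (L v)) ->
  exists psi : T -> nat, {in s, forall v, psi v \in L v} /\ {in s &, injective psi}.
Proof.
elim: s => [|x s IHs] Ls; first by exists (fun _ => 0).
have [psi [psi_L psi_inj]] : exists psi : T -> nat,
    {in s, forall v, psi v \in L v} /\ {in s &, injective psi}.
  by apply: IHs => v; apply: leq_trans (Ls v).
have [c cLx c_fresh] : exists2 c, c \in L x & c \notin map psi s.
  by apply: exists_fresh_color; rewrite size_map Ls.
exists (fun v => if v == x then c else psi v); split.
  by move=> v; rewrite inE; case: eqP => [-> // | _] /= /psi_L.
move=> u v; rewrite !inE.
case: (eqVneq u x) => [-> | ux]; case: (eqVneq v x) => [-> // | vx] /= us vs.
- by move=> cv; case/negP: c_fresh; rewrite cv map_f.
- by move=> uc; case/negP: c_fresh; rewrite -uc map_f.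
- exact: psi_inj.
Qed.

Lemma choosable_card (T : finType) (e : rel T) : irreflexive e -> choosable e #|T|.
Proof.
move=> e_irr L; rewrite cardE => LT.
have [psi [psi_L psi_inj]] := exists_injective_list_coloring LT.
exists psi; split => [v | u v]; first by apply: psi_L; rewrite mem_enum.
by apply: contraTN => /eqP /psi_inj ->; rewrite ?mem_enum ?e_irr.
Qed.

Lemma is_least_unique (P : nat -> Prop) (n n' : nat) :
  is_least P n -> is_least P n' -> n = n'.
Proof. by move=> [Pn n_min] [Pn' n'_min]; apply/eqP; rewrite eqn_leq n_min ?n'_min. Qed.

Lemma is_least_ext (P Q : nat -> Prop) (n : nat) :
  (forall j, P j <-> Q j) -> is_least P n -> is_least Q n.
Proof. by move=> PQ [Pn n_min]; split=> [|j /PQ]; [apply/PQ | apply: n_min]. Qed.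

Lemma epsilon_is_least (P : nat -> Prop) :
  (exists n, P n) -> is_least P (epsilon (inhabits 0) (is_least P)).
Proof.
move=> exP; apply: epsilon_spec.
have [n [[Pn n_min] _]] :=
  dec_inh_nat_subset_has_unique_least_element P (fun n => classic (P n)) exP.
by exists n; split=> // j /n_min /leP.
Qed.

Lemma Kedge_irr (m k : nat) : irreflexive (@Kedge m k).
Proof. by move=> x; rewrite /Kedge eqxx. Qed.

Section CompleteMultipartite.
Variables m K : nat.
Local Notation T := (Kvert m K.+1).
Local Notation G := (@Kedge m K.+1).

Lemma Kpart_lt (v : T) : Kpart v < K.+1.
Proof. by case: v => [a | [i j]] //=; rewrite ltnS. Qed.

Definition Kcolor (v : T) : 'I_K.+1 := Ordinal (Kpart_lt v).

Lemma Kcolor_proper : proper_coloring G Kcolor.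
Proof. by []. Qed.

(* a0, a1 are the first two vertices of the part of size m.  The clique of the (i, 0)
   uses up the colors [0, K), forcing a0 and a1 onto K and K+1, which leaves only
   K-1 colors for the clique of the (i, 1).  Hall's condition holds because deleting
   a0 or a1 makes the lists colorable, while a set containing both gets enough weight
   from the independent part of size m. *)
Definition bad_lists (v : T) : seq nat :=
  match v with
  | inl a => if val a == 0 then K :: iota 0 K
             else if val a == 1 then K.+1 :: iota 0 K
             else K :: K.+1 :: iota 0 K
  | inr (i, j) => if val j == 0 then iota 0 K else iota K K.+1
  end.

Lemma bad_lists_uniq v : uniq (bad_lists v).
Proof.
by case: v => [a | [i j]] /=; do 2?case: ifP => _; rewrite /= ?inE ?mem_iota ?iota_uniq; lia.
Qed.

Lemma bad_lists_size v : K <= list_size (bad_lists v).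
Proof.
rewrite /list_size undup_id ?bad_lists_uniq //.
by case: v => [a | [i j]] /=; do ?case: ifP => _; rewrite /= ?size_iota; lia.
Qed.

Lemma bad_lists_size_inl a : K.+1 <= list_size (bad_lists (inl a)).
Proof.
by rewrite /list_size undup_id ?bad_lists_uniq //=; do ?case: ifP => _; rewrite /= ?size_iota; lia.
Qed.

Definition color_off_a0 (v : T) : nat :=
  match v with
  | inl _ => K.+1
  | inr (i, j) => if val j == 0 then val i else if val i == 0 then K else K.+1 + i
  end.

Definition color_off_a1 (v : T) : nat :=
  match v with
  | inl _ => K
  | inr (i, j) => if val j == 0 then val i else K.+1 + i
  end.

Lemma color_off_a0_proper : proper_coloring G color_off_a0.
Proof.
case=> [a | [i j]] [b | [i' j']]; rewrite /Kedge /= ?eqxx //;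
  try have := ltn_ord i; try have := ltn_ord i'; rewrite /=; do ?case: eqP; lia.
Qed.

Lemma color_off_a1_proper : proper_coloring G color_off_a1.
Proof.
case=> [a | [i j]] [b | [i' j']]; rewrite /Kedge /= ?eqxx //;
  try have := ltn_ord i; try have := ltn_ord i'; rewrite /=; do ?case: eqP; lia.
Qed.

Hypotheses (m_gt1 : 1 < m) (K_gt0 : 0 < K).
Let a0 : T := inl (Ordinal (ltnW m_gt1)).
Let a1 : T := inl (Ordinal m_gt1).

Lemma color_off_a0_lists v : v != a0 -> color_off_a0 v \in bad_lists v.
Proof.
case: v => [a | [i j]] /=; last first.
  by move=> _; have := ltn_ord i; do ?case: ifP => _; rewrite /= ?inE ?mem_iota; lia.
move=> a_neq0; have {a_neq0} -> : (val a == 0) = false.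
  by apply: contraNF a_neq0 => /eqP a_0; apply/eqP; congr inl; apply: val_inj.
by case: ifP; rewrite !inE eqxx ?orbT.
Qed.

Lemma color_off_a1_lists v : v != a1 -> color_off_a1 v \in bad_lists v.
Proof.
case: v => [a | [i j]] /=; last first.
  by move=> _; have := ltn_ord i; do ?case: ifP => _; rewrite /= ?inE ?mem_iota; lia.
move=> a_neq1; have {a_neq1} -> : (val a == 1) = false.
  by apply: contraNF a_neq1 => /eqP a_1; apply/eqP; congr inl; apply: val_inj.
by case: ifP; rewrite !inE eqxx.
Qed.

Definition row (j : 'I_2) : seq T := [seq inr (i, j) | i <- enum 'I_K].

Lemma size_row j : size (row j) = K.
Proof. by rewrite size_map size_enum_ord. Qed.

Lemma row_uniq j : uniq (row j).
Proof. by rewrite map_inj_uniq ?enum_uniq // => i i' [->]. Qed.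

Lemma row_cons_clique a j : {in inl a :: row j &, forall u v, u != v -> G u v}.
Proof.
move=> u v; rewrite !inE => /orP[/eqP -> | /mapP [i _ ->]] /orP[/eqP -> | /mapP [i' _ ->]];
  rewrite ?eqxx // /Kedge /= eqSS.
by apply: contraNneq => /val_inj ->.
Qed.

Lemma bad_lists_not_colorable : ~ L_colorable G bad_lists.
Proof.
move=> [psi [psi_L psi_e]].
have inl_high a : K <= psi (inl a).
  rewrite leqNgt; apply/negP => low.
  suff : size (inl a :: row ord0) <= size (iota 0 K) by rewrite /= size_row size_iota ltnn.
  apply: clique_size_le (@row_cons_clique a ord0) psi_e _.
    by rewrite /= row_uniq andbT; apply/mapP => [[]].
  move=> v; rewrite inE => /orP[/eqP -> | /mapP [i _ ->]]; first by rewrite mem_iota.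
  exact: psi_L.
have psi_a0 : psi a0 = K.
  by have := psi_L a0; have := inl_high (Ordinal (ltnW m_gt1)); rewrite /a0 /= inE mem_iota; lia.
have psi_a1 : psi a1 = K.+1.
  by have := psi_L a1; have := inl_high (Ordinal m_gt1); rewrite /a1 /= inE mem_iota; lia.
suff : size (row ord_max) <= size (iota K.+2 K.-1) by rewrite size_row size_iota; lia.
apply: clique_size_le (row_uniq _) _ (psi_e) _.
  by move=> u v ur vr; apply: (@row_cons_clique (Ordinal m_gt1) ord_max u v); apply: mem_behead.
move=> v /mapP [i _ ->]; have := psi_L (inr (i, ord_max)).
have := psi_e a0 (inr (i, ord_max)) isT; have := psi_e a1 (inr (i, ord_max)) isT.
rewrite psi_a0 psi_a1 /= !inE !mem_iota; lia.
Qed.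

Lemma bad_lists_hall_condition : hall_condition G bad_lists.
Proof.
move=> S f sfe.
have [a0S | a0S] := boolP (a0 \in S); last first.
  apply: (card_le_hall_sum_of_coloring sfe color_off_a0_proper) => v vS.
  by apply: color_off_a0_lists; apply: contraNneq a0S => <-.
have [a1S | a1S] := boolP (a1 \in S); last first.
  apply: (card_le_hall_sum_of_coloring sfe color_off_a1_proper) => v vS.
  by apply: color_off_a1_lists; apply: contraNneq a1S => <-.
pose SA := [set v in S | Kpart v == 0].
have SA_indep : independent G SA by apply: independent_fiber.
have SA_ge2 : 2 <= #|SA|.
  rewrite -(cards2 a0 a1); apply/subset_leq_card/subsetP => v.
  by rewrite !inE => /orP[] /eqP ->; rewrite ?a0S ?a1S.
have rest_le : #|S :\: [set v | Kpart v == 0]| <= K * 2.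
  have -> : K * 2 = #|[set inr p | p : 'I_K * 'I_2] : {set T}|.
    by rewrite card_imset ?card_prod ?card_ord // => p q [].
  by apply/subset_leq_card/subsetP => [[a | p]]; rewrite !inE // => _; apply: imset_f.
have SA_lists : #|SA| * K.+1 <= \sum_(v in SA) list_size (bad_lists v).
  rewrite -sum_nat_const; apply: leq_sum => [[a | p]]; rewrite !inE ?andbF //= => _.
  exact: bad_lists_size_inl.
have card_S : #|S| = #|SA| + #|S :\: [set v | Kpart v == 0]| by rewrite /SA setIdE cardsID.
apply: leq_trans (leq_sum_independent_hall_sum
                   (I := fun c => [set v in SA | c \in bad_lists v]) sfe _ _).
- by rewrite sum_card_color_classes; nia.
- by move=> c; apply/subsetP => v; rewrite !inE => /andP[/andP[-> _] ->].
- by move=> c; apply: independent_subset SA_indep; apply/subsetP => v; rewrite inE => /andP[].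
Qed.

Lemma Kedge_hall_good_ge j : hall_good G j -> K.+1 <= j.
Proof.
move=> good_j; rewrite ltnNge; apply/negP => le_jK; apply: bad_lists_not_colorable.
by apply: good_j bad_lists_hall_condition _ => v; apply: leq_trans le_jK (bad_lists_size v).
Qed.

Lemma Kedge_hall_good_iff_choosable j : (0 < j /\ hall_good G j) <-> choosable G j.
Proof.
split=> [[_ good_j] | ch_j].
  exact: hall_good_choosable Kcolor_proper (Kedge_hall_good_ge good_j) good_j.
have good_j := choosable_hall_good ch_j.
by split=> //; apply: leq_trans (Kedge_hall_good_ge good_j).
Qed.
End CompleteMultipartite.

Theorem corollary4 (m k : nat) :
  2 <= m -> 2 <= k ->
  hall_number (@Kedge m k) = choice_number (@Kedge m k).
Proof.
case: k => [|K] // m_gt1 K_gt0.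
have hall_iff := Kedge_hall_good_iff_choosable m_gt1 K_gt0.
have ch_card := choosable_card (@Kedge_irr m K.+1).
apply: is_least_unique (is_least_ext hall_iff (epsilon_is_least _)) (epsilon_is_least _).
- by exists #|Kvert m K.+1|; apply/hall_iff.
- by exists #|Kvert m K.+1|.
Qed.
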